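(* Let $\pi\colon\mathsf{States}\to\mathbb{R}_{\ge0}$ be a potential function. For every program $C$, every $X\in\mathbb{A}_\pi$ and every constant runtime $c\in\mathbb{T}$ (i.e. $c$ is a constant function $\mathsf{States}\to[0,\infty]$), $$\mathsf{aert}_\pi[\![C]\!](X+c)\;\preceq\;\mathsf{aert}_\pi[\![C]\!](X)+c .$$
   Context: States and programs. Fix a finite set $\mathrm{Vars}$ of variables; values are $\mathbb{N}$, locations are $\mathbb{N}_{>0}$. A stack is $s\colon \mathrm{Vars}\to\mathbb{N}$; a heap is a partial map $h$ from a finite set $\mathrm{dom}(h)\subseteq\mathbb{N}_{>0}$ to $\mathbb{N}$. $h_1\perp h_2$ means disjoint domains; then $h_1\star h_2$ is their union; $h_\emptyset$ is the empty heap. $\mathsf{States}$ is the set of pairs $(s,h)$. $s(e)$ is the value of a (heap-independent) arithmetic expression $e$ under $s$, $s\models\varphi$ means the Boolean expression $\varphi$ holds under $s$, $s[x\mapsto v]$ is the updated stack. Programs are generated by $C ::= \mathtt{tick}(e) \mid x:=e \mid x:=\mathtt{alloc}(e) \mid \langle e\rangle:=e' \mid x:=\langle e\rangle \mid \mathtt{free}(e) \mid \{C\}[p]\{C\} \mid \mathtt{if}(\varphi)\{C\}\mathtt{else}\{C\} \mid C;C \mid \mathtt{while}(\varphi)\{C\}$, where $p$ is an expression with $s(p)\in[0,1]\cap\mathbb{Q}$ for all $s$. The statements other than tick, probabilistic choice, conditional, sequencing and loops are called atomic. Runtimes. $\mathbb{T}$ is the set of functions $\mathsf{States}\to[0,\infty]$,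 ordered pointwise by $\preceq$; arithmetic is pointwise with $0\cdot\infty=0$. $[\varphi]$ is the $0/1$-valued Iverson bracket. Truncated subtraction: $a\dot- b=\max(a-b,0)$, $\infty\dot- b=\infty$ for finite $b$, $a\dot-\infty=0$. $(f\oplus g)(s,h)=\min\{f(s,h_1)+g(s,h_2)\mid h=h_1\star h_2\}$; $(f \mathbin{-\!\!\ominus} g)(s,h)=\sup\{g(s,h\star h')\dot- f(s,h')\mid h'\perp h\}$; $(\inf y\colon f)(s,h)=\inf_{v\in\mathbb{N}} f(s[y\mapsto v],h)$, $(\sup y\colon f)(s,h)=\sup_{v\in\mathbb{N}}f(s[y\mapsto v],h)$; $f[x/e](s,h)=f(s[x\mapsto s(e)],h)$. $\mathsf{tm}(e)(s,h)=s(e)$ if $h=h_\emptyset$, else $\infty$; $[e\mapsto e'](s,h)=0$ if $\mathrm{dom}(h)=\{s(e)\}$ and $h(s(e))=s(e')$, else $\infty$; $[e\mapsto -](s,h)=0$ if $\mathrm{dom}(h)=\{s(e)\}$, else $\infty$; $\bigoplus_{i=1}^{e} f_i$ is the separating sum over $i=1,\dots,s(e)$ (empty one: $[\mathsf{emp}]$, which is $0$ if $h=h_\emptyset$, else $\infty$). $\mathsf{ert}[\![C]\!]\colon\mathbb{T}\to\mathbb{T}$ (with $v$ fresh): $\mathsf{ert}[\![\mathtt{tick}(e)]\!](f)=\mathsf{tm}(e)\oplus f$; $\mathsf{ert}[\![x:=e]\!](f)=f[x/e]$; $\mathsf{ert}[\![x:=\mathtt{alloc}(e)]\!](f)=\sup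 v\colon (\bigoplus_{i=1}^{e}[v+i-1\mapsto 0])\mathbin{-\!\!\ominus} f[x/v]$; $\mathsf{ert}[\![\langle e\rangle:=e']\!](f)=[e\mapsto-]\oplus([e\mapsto e']\mathbin{-\!\!\ominus} f)$; $\mathsf{ert}[\![x:=\langle e\rangle]\!](f)=\inf v\colon [e\mapsto v]\oplus([e\mapsto v]\mathbin{-\!\!\ominus} f[x/v])$; $\mathsf{ert}[\![\mathtt{free}(e)]\!](f)=[e\mapsto-]\oplus f$; $\mathsf{ert}[\![C_1;C_2]\!](f)=\mathsf{ert}[\![C_1]\!](\mathsf{ert}[\![C_2]\!](f))$; conditional: $[\varphi]\cdot\mathsf{ert}[\![C_1]\!](f)+[\neg\varphi]\cdot\mathsf{ert}[\![C_2]\!](f)$; probabilistic choice: $p\cdot\mathsf{ert}[\![C_1]\!](f)+(1-p)\cdot\mathsf{ert}[\![C_2]\!](f)$; $\mathsf{ert}[\![\mathtt{while}(\varphi)\{C\}]\!](f)=\mathrm{lfp}\, g.\ [\neg\varphi]\cdot f+[\varphi]\cdot\mathsf{ert}[\![C]\!](g)$. Amortized runtimes. A potential function is $\pi\colon\mathsf{States}\to\mathbb{R}_{\ge0}$. $\mathbb{A}_\pi=\{X\colon\mathsf{States}\to\mathbb{R}\cup\{\infty\}\mid -\pi\le X\}$, ordered pointwise (complete lattice, least element $-\pi$). $\mathsf{aert}_\pi[\![C]\!]\colon\mathbb{A}_\pi\to\mathbb{A}_\pi$: $\mathsf{aert}_\pi[\![\mathtt{tick}(e)]\!](X)=e+X$;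 for atomic $C$ other than tick, $\mathsf{aert}_\pi[\![C]\!](X)=\mathsf{ert}[\![C]\!](X+\pi)-\pi$; sequencing by composition; conditional $[\varphi]\cdot\mathsf{aert}_\pi[\![C_1]\!](X)+[\neg\varphi]\cdot\mathsf{aert}_\pi[\![C_2]\!](X)$; probabilistic choice $p\cdot\mathsf{aert}_\pi[\![C_1]\!](X)+(1-p)\cdot\mathsf{aert}_\pi[\![C_2]\!](X)$; $\mathsf{aert}_\pi[\![\mathtt{while}(\varphi)\{C'\}]\!](X)=\mathrm{lfp}\,Y.\ [\neg\varphi]\cdot X+[\varphi]\cdot\mathsf{aert}_\pi[\![C']\!](Y)$ in $(\mathbb{A}_\pi,\preceq)$. *)

From HB Require Import structures.
From mathcomp Require Import all_boot all_order all_algebra.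
From mathcomp Require Import finmap.
From mathcomp Require Import boolp classical_sets reals constructive_ereal ereal.
From mathcomp Require Import Rstruct.

Set Implicit Arguments.
Unset Strict Implicit.
Unset Printing Implicit Defensive.

Import Order.TTheory GRing.Theory Num.Theory.
Local Open Scope classical_set_scope.
Local Open Scope ring_scope.

Notation RR := Rdefinitions.R.

Section Semantics.

Variable Vars : finType.

Definition stack := Vars -> nat.
Definition upd (s : stack) (x : Vars) (v : nat) : stack :=
  fun y => if y == x then v else s y.

Definition loc := {n : nat | (0 < n)%N}.
Definition heap := {fmap loc -> nat}.
Definition state := (stack * heap)%type.

Definition hdisj (h1 h2 : heap) : Prop := [disjoint domf h1 & domf h2]%fset.
Definition hunion (h1 h2 : heap) : heap := catf h1 h2.

Definition aexp := stack -> nat.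
Definition bexp := stack -> bool.
Definition pexp := stack -> {q : rat | 0 <= q <= 1}.

Inductive prog : Type :=
| Tick   of aexp
| Assign of Vars & aexp
| Alloc  of Vars & aexp
| Store  of aexp & aexp
| Lookup of Vars & aexp
| Free   of aexp
| PChoice of prog & pexp & prog
| Ite    of bexp & prog & prog
| Seq    of prog & prog
| While  of bexp & prog.

Local Open Scope ereal_scope.

(* Functions States -> extended reals.  Runtimes (T) are those with values in
   [0, oo]; amortized runtimes (A_pi) those with values >= -pi. *)
Definition rt := state -> \bar RR.

Definition tsub (a b : \bar RR) : \bar RR :=
  match a, b with
  | _, +oo => 0
  | +oo, _ => +oo
  | a, b => maxe (a - b) 0
  end.

Definition iver (phi : bexp) (st : state) : \bar RR :=
  if phi st.1 then 1 else 0.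

Definition sepadd (f g : rt) : rt := fun st =>
  ereal_inf [set z | exists h1 h2 : heap,
     [/\ hdisj h1 h2, st.2 = hunion h1 h2 & z = f (st.1, h1) + g (st.1, h2)]].

Definition sepsub (f g : rt) : rt := fun st =>
  ereal_sup [set z | exists h' : heap,
     hdisj h' st.2 /\ z = tsub (g (st.1, hunion st.2 h')) (f (st.1, h'))].

Definition subst (f : rt) (x : Vars) (e : aexp) : rt :=
  fun st => f (upd st.1 x (e st.1), st.2).

Definition tm (e : aexp) : rt := fun st =>
  if `[< st.2 = fmap0 >] then ((e st.1)%:R)%:E else +oo.

Definition emp : rt := fun st => if `[< st.2 = fmap0 >] then 0 else +oo.

Definition pts_val (a b : nat) : rt := fun st =>
  if `[< exists l : loc, [/\ val l = a, domf st.2 = [fset l]%fset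
                             & st.2.[? l]%fmap = Some b] >] then 0 else +oo.
Definition pts_any_val (a : nat) : rt := fun st =>
  if `[< exists l : loc, val l = a /\ domf st.2 = [fset l]%fset >] then 0 else +oo.

Definition pts (e e' : aexp) : rt := fun st => pts_val (e st.1) (e' st.1) st.
Definition pts_any (e : aexp) : rt := fun st => pts_any_val (e st.1) st.

Fixpoint bigsep (n : nat) (F : nat -> rt) : rt :=
  match n with
  | 0 => emp
  | m.+1 => sepadd (bigsep m F) (F m.+1)
  end.

Definition pr (p : pexp) (st : state) : \bar RR := (ratr (val (p st.1)))%:E.

(* lfp in the complete lattice (T, <=): Knaster-Tarski meet of prefixed points *)
Definition lfpT (F : rt -> rt) : rt := fun st =>
  ereal_inf [set g st | g in [set g : rt |
     (forall t, 0 <= g t) /\ (forall t, F g t <= g t)]].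

(* lfp in the complete lattice (A_pi, <=) *)
Definition lfpA (pi : state -> RR) (F : rt -> rt) : rt := fun st =>
  ereal_inf [set g st | g in [set g : rt |
     (forall t, (- pi t)%:E <= g t) /\ (forall t, F g t <= g t)]].

(* Expected runtime transformer.  The fresh variable v of the alloc and lookup
   rules is unfolded semantically: sup/inf over its value n in N. *)
Fixpoint ert (C : prog) (f : rt) : rt :=
  match C with
  | Tick e => sepadd (tm e) f
  | Assign x e => subst f x e
  | Alloc x e => fun st =>
      ereal_sup (range (fun n : nat =>
        sepsub (bigsep (e st.1) (fun i => pts_val (n + i - 1) 0))
               (fun st' => f (upd st'.1 x n, st'.2)) st))
  | Store e e' => sepadd (pts_any e) (sepsub (pts e e') f)
  | Lookup x e => fun st =>
      ereal_inf (range (fun n : nat =>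
        sepadd (fun st' => pts_val (e st'.1) n st')
               (sepsub (fun st' => pts_val (e st'.1) n st')
                       (fun st' => f (upd st'.1 x n, st'.2))) st))
  | Free e => sepadd (pts_any e) f
  | PChoice C1 p C2 => fun st =>
      pr p st * ert C1 f st + (1 - pr p st) * ert C2 f st
  | Ite phi C1 C2 => fun st =>
      iver phi st * ert C1 f st + iver (fun s => ~~ phi s) st * ert C2 f st
  | Seq C1 C2 => ert C1 (ert C2 f)
  | While phi C' =>
      lfpT (fun g st => iver (fun s => ~~ phi s) st * f st
                        + iver phi st * ert C' g st)
  end.

Fixpoint aert (pi : state -> RR) (C : prog) (X : rt) : rt :=
  let atomic := fun st => ert C (fun st' => X st' + (pi st')%:E) st - (pi st)%:E in
  match C with
  | Tick e => fun st => ((e st.1)%:R)%:E + X st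
  | Assign _ _ | Alloc _ _ | Store _ _ | Lookup _ _ | Free _ => atomic
  | PChoice C1 p C2 => fun st =>
      pr p st * aert pi C1 X st + (1 - pr p st) * aert pi C2 X st
  | Ite phi C1 C2 => fun st =>
      iver phi st * aert pi C1 X st + iver (fun s => ~~ phi s) st * aert pi C2 X st
  | Seq C1 C2 => aert pi C1 (aert pi C2 X)
  | While phi C' =>
      lfpA pi (fun Y st => iver (fun s => ~~ phi s) st * X st
                           + iver phi st * aert pi C' Y st)
  end.

End Semantics.

(* For a finite constant [r >= 0] we prove more: [X <= Y + r] pointwise
   implies [aert C X <= aert C Y + r], by induction on [C].  Separating
   addition and subtraction, infima, suprema and truncated subtraction all
   commute with adding [r] up to [<=]; probabilistic choice is a convex
   combination; and for a loop, adding [r] to a prefixed point of the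
   functional for [Y] gives a prefixed point of the functional for [X].
   For [c = +oo] the right-hand side is [+oo], since [aert C X] never drops
   below [-pi]. *)
From HB Require Import structures.
From mathcomp Require Import all_boot all_order all_algebra.
From mathcomp Require Import finmap.
From mathcomp Require Import boolp classical_sets reals constructive_ereal ereal.
From mathcomp Require Import Rstruct.

Import Order.TTheory GRing.Theory Num.Theory.
Local Open Scope classical_set_scope.
Local Open Scope ring_scope.
Local Open Scope ereal_scope.

Lemma ereal_inf_shift (S T : set \bar RR) (r : RR) :
  (forall x, S x -> exists2 y, T y & y <= x + r%:E) ->
  ereal_inf T <= ereal_inf S + r%:E.
Proof.
move=> ST; rewrite -leeBlDr //; apply: le_ereal_inf_tmp => x Sx.
have [y Ty yx] := ST x Sx; rewrite leeBlDr //.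
exact: le_trans (ereal_inf_lbound Ty) yx.
Qed.

Lemma ereal_sup_shift (S T : set \bar RR) (r : RR) :
  (forall x, S x -> exists2 y, T y & x <= y + r%:E) ->
  ereal_sup S <= ereal_sup T + r%:E.
Proof.
move=> ST; apply: ge_ereal_sup => x Sx.
have [y Ty xy] := ST x Sx; apply: le_trans xy _.
by apply: leeD2r; exact: ereal_sup_ubound.
Qed.

Lemma tsub_ge0 (a b : \bar RR) : 0 <= tsub a b.
Proof. by case: a => [a| |]; case: b => [b| |] //=; rewrite le_max lexx orbT. Qed.

Lemma tsubE (a b : \bar RR) : a != +oo -> b != +oo -> tsub a b = maxe (a - b) 0.
Proof. by case: a => [a| |]; case: b => [b| |]. Qed.

Lemma tsub_shift (a' a b : \bar RR) (r : RR) : (0 <= r)%R ->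
  a' <= a + r%:E -> tsub a' b <= tsub a b + r%:E.
Proof.
move=> r0 a'a.
have [->|b_fin] := eqVneq b +oo.
  by case: a' a'a => [?| |]; case: a => [?| |] //= _; rewrite add0e lee_fin.
have [->|a_fin] := eqVneq a +oo.
  by case: b b_fin => [?| |] //= _; rewrite ?addye ?leey.
have a'_fin : a' != +oo.
  by apply: contra_neq a_fin => a'y; move: a'a; rewrite a'y leye_eq; case: (a).
rewrite !tsubE // ge_max; apply/andP; split.
  apply: le_trans (_ : a - b + r%:E <= _); last by apply: leeD2r; rewrite le_max lexx.
  by rewrite addeAC; apply: leeD2r.
apply: le_trans (_ : 0 + r%:E <= _); last by apply: leeD2r; rewrite le_max lexx orbT.
by rewrite add0e lee_fin.
Qed.

Section ConvexCombination.
Variable P : RR.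
Hypotheses (P_ge0 : (0 <= P)%R) (P_le1 : (0 <= 1 - P)%R).

Lemma convex_comb_ge (x : RR) (a b : \bar RR) : x%:E <= a -> x%:E <= b ->
  x%:E <= P%:E * a + (1 - P)%:E * b.
Proof.
move=> xa xb; apply: le_trans (_ : (P * x)%:E + ((1 - P) * x)%:E <= _).
  by rewrite -EFinD -mulrDl addrC subrK mul1r.
by apply: leeD; rewrite EFinM; apply: lee_wpmul2l; rewrite ?lee_fin.
Qed.

Lemma convex_comb_shift (a a' b b' : \bar RR) (r : RR) :
  a' <= a + r%:E -> b' <= b + r%:E ->
  P%:E * a' + (1 - P)%:E * b' <= P%:E * a + (1 - P)%:E * b + r%:E.
Proof.
move=> a'a b'b.
apply: le_trans (_ : P%:E * (a + r%:E) + (1 - P)%:E * (b + r%:E) <= _).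
  by apply: leeD; apply: lee_wpmul2l; rewrite ?lee_fin.
rewrite !muleDr ?fin_num_adde_defl // -!EFinM addeACA -EFinD.
by rewrite -mulrDl addrCA subrr addr0 mul1r.
Qed.

End ConvexCombination.

Section AmortizedRuntime.
Variable Vars : finType.
Implicit Types (f F G X Y : rt Vars) (st : state Vars) (C : prog Vars).

Definition atomic C : bool :=
  match C with
  | Assign _ _ | Alloc _ _ | Store _ _ | Lookup _ _ | Free _ => true
  | _ => false
  end.

Lemma aert_atomic (pi : state Vars -> RR) C X st : atomic C ->
  aert pi C X st = ert C (fun st' => X st' + (pi st')%:E) st - (pi st)%:E.
Proof. by case: C. Qed.

Lemma sepadd_shift F G G' (r : RR) st :
  (forall st, G' st <= G st + r%:E) -> sepadd F G' st <= sepadd F G st + r%:E.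
Proof.
move=> G'G; apply: ereal_inf_shift => _ [h1 [h2 [h12 sth ->]]].
exists (F (st.1, h1) + G' (st.1, h2)); first by exists h1, h2.
by rewrite -addeA; apply: leeD2l.
Qed.

Lemma sepsub_shift F G G' (r : RR) st : (0 <= r)%R ->
  (forall st, G' st <= G st + r%:E) -> sepsub F G' st <= sepsub F G st + r%:E.
Proof.
move=> r0 G'G; apply: ereal_sup_shift => _ [h [hh' ->]].
exists (tsub (G (st.1, hunion st.2 h)) (F (st.1, h))); first by exists h.
exact: tsub_shift.
Qed.

Lemma ert_atomic_shift C f f' (r : RR) : atomic C -> (0 <= r)%R ->
  (forall st, f' st <= f st + r%:E) -> forall st, ert C f' st <= ert C f st + r%:E.
Proof.
case: C => //= [x e|x e|e e'|x e|e] _ r0 f'f st.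
- exact: f'f.
- apply: ereal_sup_shift => _ [n _ <-]; eexists; first by exists n.
  by apply: sepsub_shift => // st'; exact: f'f.
- by apply: sepadd_shift => st'; exact: sepsub_shift.
- apply: ereal_inf_shift => _ [n _ <-]; eexists; first by exists n.
  by apply: sepadd_shift => st'; apply: sepsub_shift => // st''; exact: f'f.
- exact: sepadd_shift.
Qed.

Lemma sepadd_ge0 F G st : (forall st, 0 <= F st) -> (forall st, 0 <= G st) ->
  0 <= sepadd F G st.
Proof.
move=> F0 G0; apply: le_ereal_inf_tmp => _ [h1 [h2 [_ _ ->]]].
exact: adde_ge0.
Qed.

Lemma sepsub_ge0 F G st : 0 <= sepsub F G st.
Proof.
apply: le_trans (tsub_ge0 (G (st.1, hunion st.2 fmap0)) (F (st.1, fmap0))) _.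
by apply: ereal_sup_ubound; exists fmap0; split; first exact: fdisjoint0X.
Qed.

Lemma pts_val_ge0 a b st : 0 <= pts_val a b st.
Proof. by rewrite /pts_val; case: ifP. Qed.

Lemma pts_any_val_ge0 a st : 0 <= pts_any_val a st.
Proof. by rewrite /pts_any_val; case: ifP. Qed.

Lemma ert_atomic_ge0 C f st : atomic C -> (forall st, 0 <= f st) -> 0 <= ert C f st.
Proof.
case: C => //= [x e|x e|e e'|x e|e] _ f0.
- exact: f0.
- apply: le_trans (ereal_sup_ubound (ex_intro2 _ _ 0%N I erefl)).
  exact: sepsub_ge0.
- by apply: sepadd_ge0 => st'; [exact: pts_any_val_ge0 | exact: sepsub_ge0].
- apply: le_ereal_inf_tmp => _ [n _ <-].
  by apply: sepadd_ge0 => st'; [exact: pts_val_ge0 | exact: sepsub_ge0].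
- by apply: sepadd_ge0 => // st'; exact: pts_any_val_ge0.
Qed.

Lemma prE (p : pexp Vars) st : exists P : RR,
  [/\ pr p st = P%:E, 1 - pr p st = (1 - P)%:E, (0 <= P)%R & (0 <= 1 - P)%R].
Proof.
rewrite /pr; case: (p st.1) => q /= /andP[q0 q1]; exists (ratr q); split => //.
  by rewrite ler0q.
by rewrite subr_ge0 -(rmorph1 (@ratr RR)) ler_rat.
Qed.

Lemma iver_guard (phi : bexp Vars) st (a b : \bar RR) :
  iver phi st * a + iver (fun s => ~~ phi s) st * b = if phi st.1 then a else b.
Proof.
by rewrite /iver /=; case: (phi st.1); rewrite mul1e mul0e ?adde0 ?add0e.
Qed.

Variable pi : state Vars -> RR.

Lemma aert_atomic_geNpi C X : atomic C -> (forall st, (- pi st)%:E <= X st) ->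
  forall st, (- pi st)%:E <= aert pi C X st.
Proof.
move=> Ca X_ge st; rewrite aert_atomic // leeBrDr // -EFinD addNr.
by apply: ert_atomic_ge0 => // st'; rewrite -leeBlDr // sub0e; exact: X_ge.
Qed.

Lemma aert_geNpi C X : (forall st, (- pi st)%:E <= X st) ->
  forall st, (- pi st)%:E <= aert pi C X st.
Proof.
elim: C X => [e|x e|x e|e e'|x e|e|C1 IH1 p C2 IH2|phi C1 IH1 C2 IH2|C1 IH1 C2 IH2|phi C IH]
  X X_ge st; try exact: aert_atomic_geNpi; rewrite /=.
- by apply: le_trans (X_ge st) _; rewrite addeC leeDl ?lee_fin.
- have [P [pE qE P0 P1]] := prE p st; rewrite qE pE.
  by apply: convex_comb_ge => //; [exact: IH1|exact: IH2].
- by rewrite iver_guard; case: ifP => _; [exact: IH1|exact: IH2].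
- by apply: IH1; exact: IH2.
- by apply: le_ereal_inf_tmp => _ [g [g_ge _] <-].
Qed.

Lemma aert_atomic_shift C X Y (r : RR) : atomic C -> (0 <= r)%R ->
  (forall st, X st <= Y st + r%:E) -> forall st, aert pi C X st <= aert pi C Y st + r%:E.
Proof.
move=> Ca r0 XY st; rewrite !aert_atomic // addeAC; apply: leeD2r.
by apply: ert_atomic_shift => // st'; rewrite addeAC; apply: leeD2r.
Qed.

Lemma aert_shift C X Y (r : RR) : (0 <= r)%R ->
  (forall st, X st <= Y st + r%:E) -> forall st, aert pi C X st <= aert pi C Y st + r%:E.
Proof.
move=> r0.
elim: C X Y => [e|x e|x e|e e'|x e|e|C1 IH1 p C2 IH2|phi C1 IH1 C2 IH2|C1 IH1 C2 IH2|phi C IH]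
  X Y XY st; try exact: aert_atomic_shift; rewrite /=.
- by rewrite -addeA; apply: leeD2l.
- have [P [pE qE P0 P1]] := prE p st; rewrite qE pE.
  by apply: convex_comb_shift => //; [exact: IH1|exact: IH2].
- by rewrite !iver_guard; case: ifP => _; [exact: IH1|exact: IH2].
- by apply: IH1; exact: IH2.
- apply: ereal_inf_shift => _ [g [g_ge g_pre] <-].
  exists (g st + r%:E) => //; exists (fun t => g t + r%:E) => //; split => t.
    by apply: le_trans (g_ge t) _; exact: leeDl.
  have /= := g_pre t; rewrite addeC iver_guard addeC iver_guard.
  case: ifP => _ g_t.
    by apply: le_trans (leeD2r _ g_t); apply: IH => t'.
  by apply: le_trans (leeD2r _ g_t); exact: XY.
Qed.

End AmortizedRuntime.

Theorem mainTheorem4 (Vars : finType) (pi : state Vars -> RR)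
  (pi_ge0 : forall st, (0 <= pi st)%R)
  (C : prog Vars) (X : rt Vars) (X_in_A : forall st, (- pi st)%:E <= X st)
  (c : \bar RR) (c_ge0 : 0 <= c) :
  forall st : state Vars,
    aert pi C (fun st' => X st' + c) st <= aert pi C X st + c.
Proof.
move=> st; case: c c_ge0 => [r| |] //.
  by rewrite lee_fin => r0; apply: aert_shift.
move=> _; rewrite addey ?leey // -ltNye.
exact: lt_le_trans (ltNyr (- pi st)) (aert_geNpi _ _ _ _ X_in_A st).
Qed.
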